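(* Consider the fixed cost inverse fractional knapsack problem under the $l_1$-norm (defined in the context). If it has an optimal solution, then there exists an optimal solution $(u,v)$ with $v_i=0$ for all $i\in I^1$ and $u_i=0$ for all $i\in I^0$, i.e., profits are only increased for items with $x^*_i=1$ and only reduced for items with $x^*_i=0$.
   Context: Given positive integers $p_i,c_i$ ($i=1,\dots,n$), a budget $b$, and a vector $x^*\in\{0,1\}^n$ with $\sum_{i=1}^n c_i x^*_i=b$. Let $I^1=\{i:x^*_i=1\}$ and $I^0=\{i:x^*_i=0\}$. Given nonnegative integer bounds $\bar u_i,\bar v_i$ and nonnegative weights $w_i$. A feasible modification is $(u,v)$ with $u_i\in[0,\bar u_i]\cap\mathbb Z$, $v_i\in[0,\bar v_i]\cap\mathbb Z$, giving modified profits $\tilde p_i=p_i+u_i-v_i$; costs $c_i$ are not modified. The fixed cost inverse fractional knapsack problem asks for a feasible modification such that $x^*$ is an optimal solution of $\max\{\sum_i\tilde p_i x_i:\sum_i c_ix_i\le b,\ x_i\in[0,1]\}$ and $\sum_{i=1}^n w_i(u_i+v_i)$ is minimal. *)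

From mathcomp Require Import all_boot all_order all_algebra.
Set Implicit Arguments. Unset Strict Implicit. Unset Printing Implicit Defensive.
Import Order.TTheory GRing.Theory Num.Theory.
Local Open Scope ring_scope.

Definition mod_profit (R : realFieldType) (n : nat) (p u v : 'I_n -> nat) (i : 'I_n) : R :=
  (p i)%:R + (u i)%:R - (v i)%:R.

Definition frac_feasible (R : realFieldType) (n : nat) (c : 'I_n -> nat) (b : nat)
  (x : 'I_n -> R) : Prop :=
  (forall i, 0 <= x i <= 1) /\ \sum_(i < n) (c i)%:R * x i <= b%:R.

Definition bvec (R : realFieldType) (n : nat) (xs : 'I_n -> bool) : 'I_n -> R :=
  fun i => (xs i : nat)%:R.

Definition frac_optimal (R : realFieldType) (n : nat) (pt : 'I_n -> R) (c : 'I_n -> nat)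
  (b : nat) (xs : 'I_n -> bool) : Prop :=
  frac_feasible c b (bvec R xs) /\
  forall x : 'I_n -> R, frac_feasible c b x ->
    \sum_(i < n) pt i * x i <= \sum_(i < n) pt i * bvec R xs i.

Definition inv_feasible (R : realFieldType) (n : nat) (p c : 'I_n -> nat) (b : nat)
  (xs : 'I_n -> bool) (ub vb : 'I_n -> nat) (u v : 'I_n -> nat) : Prop :=
  (forall i, (u i <= ub i)%N /\ (v i <= vb i)%N) /\
  frac_optimal (mod_profit R p u v) c b xs.

Definition inv_cost (R : realFieldType) (n : nat) (w : 'I_n -> R) (u v : 'I_n -> nat) : R :=
  \sum_(i < n) w i * ((u i)%:R + (v i)%:R).

Definition inv_optimal (R : realFieldType) (n : nat) (p c : 'I_n -> nat) (b : nat)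
  (xs : 'I_n -> bool) (ub vb : 'I_n -> nat) (w : 'I_n -> R) (u v : 'I_n -> nat) : Prop :=
  inv_feasible R p c b xs ub vb u v /\
  forall u' v' : 'I_n -> nat, inv_feasible R p c b xs ub vb u' v' ->
    inv_cost w u v <= inv_cost w u' v'.

(* Replacing each pair (u_i, v_i) by its net effect, moved in the direction
   favourable to x* (an increase for items with x*_i = 1, a decrease for items
   with x*_i = 0), keeps the bounds, does not increase any u_i + v_i, and can
   only raise the profit of the chosen items and lower that of the others.
   The latter keeps x* optimal, since for x in [0,1]^n the gain
   (p'_i - p_i) x_i is largest at x_i = x*_i. *)

From mathcomp Require Import all_boot all_order all_algebra.
Set Implicit Arguments. Unset Strict Implicit. Unset Printing Implicit Defensive.
Import Order.TTheory GRing.Theory Num.Theory.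
Local Open Scope ring_scope.

Lemma natrB_le (R : numDomainType) (m n : nat) : m%:R - n%:R <= (m - n)%:R :> R.
Proof.
have [le_nm | lt_mn] := leqP n m; first by rewrite natrB.
rewrite (eqP (ltnW lt_mn : (m - n == 0)%N)) subr_le0 ler_nat.
exact: ltnW.
Qed.

Lemma frac_optimal_shift (R : realFieldType) (n : nat) (pt pt' : 'I_n -> R)
    (c : 'I_n -> nat) (b : nat) (xs : 'I_n -> bool) :
  (forall i, xs i -> pt i <= pt' i) -> (forall i, ~~ xs i -> pt' i <= pt i) ->
  frac_optimal pt c b xs -> frac_optimal pt' c b xs.
Proof.
move=> up down [feas_xs opt_xs]; split=> // x feas_x.
have gain_le i : (pt' i - pt i) * x i <= (pt' i - pt i) * bvec R xs i.
  have /andP[x_ge0 x_le1] := feas_x.1 i.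
  rewrite /bvec; case: (boolP (xs i)) => [xs_i | nxs_i] /=.
    by rewrite mulr1 ler_piMr // subr_ge0 up.
  by rewrite mulr0 mulr_le0_ge0 // subr_le0 down.
have split_sum y : \sum_(i < n) pt' i * y i =
    \sum_(i < n) pt i * y i + \sum_(i < n) (pt' i - pt i) * y i.
  by rewrite -big_split; apply: eq_bigr => i _ /=; rewrite -mulrDl addrC subrK.
by rewrite !split_sum lerD ?opt_xs ?ler_sum.
Qed.

Lemma inv_cost_le (R : realFieldType) (n : nat) (w : 'I_n -> R)
    (u v u' v' : 'I_n -> nat) :
  (forall i, 0 <= w i) -> (forall i, u' i <= u i)%N -> (forall i, v' i <= v i)%N ->
  inv_cost w u' v' <= inv_cost w u v.
Proof.
move=> w_ge0 le_u le_v; apply: ler_sum => i _.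
by rewrite ler_wpM2l // -!natrD ler_nat leq_add.
Qed.

Section NetModification.

Variables (n : nat) (xs : 'I_n -> bool) (u v : 'I_n -> nat).

Definition net_up (i : 'I_n) : nat := if xs i then (u i - v i)%N else 0%N.

Definition net_down (i : 'I_n) : nat := if xs i then 0%N else (v i - u i)%N.

Lemma net_up_le i : (net_up i <= u i)%N.
Proof. by rewrite /net_up; case: (xs i); rewrite ?leq_subr. Qed.

Lemma net_down_le i : (net_down i <= v i)%N.
Proof. by rewrite /net_down; case: (xs i); rewrite ?leq_subr. Qed.

Lemma net_up_chosen i : xs i -> net_up i = (u i - v i)%N.
Proof. by rewrite /net_up => ->. Qed.

Lemma net_down_chosen i : xs i -> net_down i = 0%N.
Proof. by rewrite /net_down => ->. Qed.

Lemma net_up_unchosen i : ~~ xs i -> net_up i = 0%N.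
Proof. by rewrite /net_up => /negbTE->. Qed.

Lemma net_down_unchosen i : ~~ xs i -> net_down i = (v i - u i)%N.
Proof. by rewrite /net_down => /negbTE->. Qed.

Variables (R : realFieldType) (p : 'I_n -> nat).

Lemma mod_profit_net_chosen i :
  xs i -> mod_profit R p u v i <= mod_profit R p net_up net_down i.
Proof.
move=> xs_i; rewrite /mod_profit net_up_chosen // net_down_chosen // subr0.
by rewrite -addrA lerD2l natrB_le.
Qed.

Lemma mod_profit_net_unchosen i :
  ~~ xs i -> mod_profit R p net_up net_down i <= mod_profit R p u v i.
Proof.
move=> nxs_i; rewrite /mod_profit net_up_unchosen // net_down_unchosen // addr0.
by rewrite -addrA lerD2l -opprB lerN2 natrB_le.
Qed.

Lemma inv_feasible_net c b ub vb :
  inv_feasible R p c b xs ub vb u v -> inv_feasible R p c b xs ub vb net_up net_down.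
Proof.
move=> [bounds opt]; split.
  move=> i; have [le_ub le_vb] := bounds i.
  by split; [apply: leq_trans le_ub; apply: net_up_le
            | apply: leq_trans le_vb; apply: net_down_le].
exact: frac_optimal_shift mod_profit_net_chosen mod_profit_net_unchosen opt.
Qed.

End NetModification.

Theorem mainTheorem2 (R : realFieldType) (n : nat)
  (p c : 'I_n -> nat) (b : nat) (xs : 'I_n -> bool)
  (ub vb : 'I_n -> nat) (w : 'I_n -> R) :
  (forall i, (0 < p i)%N) -> (forall i, (0 < c i)%N) ->
  (\sum_(i < n) c i * xs i)%N = b ->
  (forall i, 0 <= w i) ->
  (exists u v, inv_optimal p c b xs ub vb w u v) ->
  exists u v, inv_optimal p c b xs ub vb w u v /\
    (forall i, xs i -> v i = 0%N) /\ (forall i, ~~ xs i -> u i = 0%N).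
Proof.
move=> _ _ _ w_ge0 [u [v [feas_uv min_uv]]].
exists (net_up xs u v), (net_down xs u v); split; last first.
  by split=> i; [apply: net_down_chosen | apply: net_up_unchosen].
split; first exact: inv_feasible_net.
move=> u' v' feas'; apply: le_trans (min_uv _ _ feas').
exact: inv_cost_le (net_up_le xs u v) (net_down_le xs u v).
Qed.
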